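(* Let $(R,\mathfrak m)$ be a noetherian local ring, $\nu$ a valuation centered on $R$, and assume $I=\mathrm{Nil}(R)$ is the only associated prime ideal of $R$. Fix $n\ge1$ and take $y_1,\ldots,y_{r+s}\in I^n$ whose images generate $I^n/I^{n+1}$ as an $R_{\rm red}$-module. Let $b\in R\setminus I$ and let $\pi:R\to R^{(1)}$ be the local blowing up with respect to $\nu$ along $(b,y_1,\ldots,y_r)$, with $y_i^{(1)}=\pi(y_i)/b$ for $1\le i\le r$. If the images of $y_1,\ldots,y_r$ in $I^n/I^{n+1}$ are $R_{\rm red}$-linearly independent, then the images of $y_1^{(1)},\ldots,y_r^{(1)}$ in $I_{(1)}^n/I_{(1)}^{n+1}$ are $(R^{(1)})_{\rm red}$-linearly independent, where $I_{(1)}=\mathrm{Nil}(R^{(1)})$.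
   Context: All rings are commutative noetherian with $1$; $\mathrm{Nil}(A)$ is the nilradical of $A$ and $A_{\rm red}=A/\mathrm{Nil}(A)$. A valuation on a ring $R$ is a map $\nu:R\to\Gamma\cup\{\infty\}$ ($\Gamma$ an ordered abelian group) with $\nu(ab)=\nu(a)+\nu(b)$, $\nu(a+b)\ge\min\{\nu(a),\nu(b)\}$, $\nu(1)=0$, $\nu(0)=\infty$, whose support $\mathrm{supp}(\nu)=\{a:\nu(a)=\infty\}$ is a minimal prime ideal; it extends to localizations at multiplicative sets disjoint from the support via $\nu(a/s)=\nu(a)-\nu(s)$ and restricts to subrings, implicitly. $\nu$ has a center on $R$ if $\nu\ge0$ on $R$; its center is $\mathfrak C_\nu(R)=\{a:\nu(a)>0\}$. $\nu$ is centered on $(R,\mathfrak m)$ if $\nu\ge0$ on $R$ and $\nu>0$ on $\mathfrak m$. Local blowing up: for $b\in R\setminus\mathrm{supp}(\nu)$ let $J(b)=\bigcup_{i\ge1}\mathrm{ann}_R(b^i)$, so $R/J(b)\subseteq R_b$. Given $a_1,\ldots,a_r\in R$ with $\nu(a_i)\ge\nu(b)$, let $R'=(R/J(b))[a_1/b,\ldots,a_r/b]\subseteq R_b$ and $R^{(1)}=R'_{\mathfrak C_\nu(R')}$; the canonical map $R\to R^{(1)}$ is the local blowing up of $R$ with respect to $\nu$ along $(b,a_1,\ldots,a_r)$. (Here $\mathrm{supp}(\nu)=I$, $J(b)=0$, and $\nu(y_i)=\infty$ since $y_i$ is nilpotent.) *)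

From HB Require Import structures.
From mathcomp Require Import all_boot all_order all_algebra.
Set Implicit Arguments. Unset Strict Implicit. Unset Printing Implicit Defensive.
Import Order.TTheory GRing.Theory.
Local Open Scope ring_scope.

Section RingDefs.
Variable R : comPzRingType.

Definition is_ideal (J : R -> Prop) : Prop :=
  J 0 /\ (forall x y, J x -> J y -> J (x + y)) /\ (forall a x, J x -> J (a * x)).

Definition is_prime (P : R -> Prop) : Prop :=
  is_ideal P /\ ~ P 1 /\ (forall x y, P (x * y) -> P x \/ P y).

Definition nilrad (x : R) : Prop := exists k : nat, x ^+ k = 0.

Definition is_assoc_prime (P : R -> Prop) : Prop :=
  is_prime P /\ exists x : R, forall a, P a <-> a * x = 0.

Definition ideal_mul (J K : R -> Prop) (x : R) : Prop :=
  exists s : seq (R * R), (forall p, p \in s -> J p.1 /\ K p.2) /\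
    x = \sum_(p <- s) p.1 * p.2.

Fixpoint ideal_pow (J : R -> Prop) (n : nat) : R -> Prop :=
  match n with
  | 0 => fun _ => True
  | k.+1 => ideal_mul J (ideal_pow J k)
  end.

Definition noetherian : Prop :=
  forall J : nat -> R -> Prop, (forall k, is_ideal (J k)) ->
    (forall k x, J k x -> J k.+1 x) ->
    exists N, forall k, (N <= k)%N -> forall x, J k x -> J N x.

Definition is_local (m : R -> Prop) : Prop :=
  is_ideal m /\ ~ m 1 /\ forall x, ~ m x -> exists y, x * y = 1.
End RingDefs.

Definition ordered_group (G : zmodType) (le : G -> G -> bool) : Prop :=
  (forall x, le x x) /\ (forall x y, le x y -> le y x -> x = y) /\
  (forall x y z, le x y -> le y z -> le x z) /\ (forall x y, le x y || le y x) /\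
  (forall x y z, le x y -> le (x + z) (y + z)).

(* Gamma ∪ {∞}, with None = ∞ *)
Definition vle (G : zmodType) (le : G -> G -> bool) (a b : option G) : bool :=
  match a, b with
  | _, None => true
  | None, Some _ => false
  | Some x, Some y => le x y
  end.

Definition vlt (G : zmodType) (le : G -> G -> bool) (a b : option G) : bool :=
  vle le a b && (a != b).

Definition vadd (G : zmodType) (a b : option G) : option G :=
  match a, b with
  | Some x, Some y => Some (x + y)
  | _, _ => None
  end.

Definition is_valuation (R : comPzRingType) (G : zmodType) (le : G -> G -> bool)
    (nu : R -> option G) : Prop :=
  (forall a b, nu (a * b) = vadd (nu a) (nu b)) /\
  (forall a b g, vle le g (nu a) -> vle le g (nu b) -> vle le g (nu (a + b))) /\
  nu 1 = Some 0 /\ nu 0 = None /\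
  (* the support is a minimal prime ideal *)
  is_prime (fun a => nu a = None) /\
  (forall P, is_prime P -> (forall a, P a -> nu a = None) -> forall a, nu a = None -> P a).

Definition centered_on (R : comPzRingType) (G : zmodType) (le : G -> G -> bool)
    (nu : R -> option G) (m : R -> Prop) : Prop :=
  (forall a, vle le (Some 0) (nu a)) /\ (forall a, m a -> vlt le (Some 0) (nu a)).

(* phi : R -> T is a localization of R at the powers of b (T = R_b);
   bi is the inverse of phi b in T *)
Definition is_loc_powers (R T : comPzRingType) (phi : {rmorphism R -> T}) (b : R) (bi : T) : Prop :=
  phi b * bi = 1 /\
  (forall t : T, exists a k, t * phi b ^+ k = phi a) /\
  (forall a a', phi a = phi a' <-> exists k, b ^+ k * a = b ^+ k * a').

Inductive gen_subring (T : comPzRingType) (A : T -> Prop) : T -> Prop :=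
  | gs_base t : A t -> gen_subring A t
  | gs_one : gen_subring A 1
  | gs_add u v : gen_subring A u -> gen_subring A v -> gen_subring A (u + v)
  | gs_opp u : gen_subring A u -> gen_subring A (- u)
  | gs_mul u v : gen_subring A u -> gen_subring A v -> gen_subring A (u * v).

(* psi : T -> S restricted to the subring Rp of T is a localization of Rp at the
   multiplicative set {c in Rp | ~ C c}  (i.e. S = (Rp)_C when C is a prime of Rp) *)
Definition is_loc_at_prime (T S : comPzRingType) (Rp C : T -> Prop) (psi : T -> S) : Prop :=
  psi 1 = 1 /\
  (forall u v, Rp u -> Rp v -> psi (u + v) = psi u + psi v) /\
  (forall u v, Rp u -> Rp v -> psi (u * v) = psi u * psi v) /\
  (forall c, Rp c -> ~ C c -> exists w, psi c * w = 1) /\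
  (forall z : S, exists a c, Rp a /\ Rp c /\ ~ C c /\ z * psi c = psi a) /\
  (forall a a', Rp a -> Rp a' ->
     (psi a = psi a' <-> exists c, Rp c /\ ~ C c /\ c * a = c * a')).

From HB Require Import structures.
From mathcomp Require Import all_boot all_order all_algebra ring.
Set Implicit Arguments. Unset Strict Implicit. Unset Printing Implicit Defensive.
Import Order.TTheory GRing.Theory.
Local Open Scope ring_scope.

(* Clear denominators twice.  In R^(1) = R'_C an element of
   Nil(R^(1))^k is a fraction w / e with w in Nil(R_b)^k and psi e invertible,
   and in R_b an element of Nil(R_b)^k is a fraction a / b^M with a in Nil(R)^k;
   in both cases because a nilpotent fraction has a nilpotent numerator once
   the denominator is enlarged by an element killing a power of the numerator.
   A relation sum c_i y_i^(1) in Nil(R^(1))^(n+1) thus becomes a relation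
   sum c'_i y_i in Nil(R)^(n+1), and the c'_i differ from the c_i by factors
   that are invertible in R^(1), so nilpotency of the c'_i transfers back. *)

Section IdealPow.
Variables (R : comPzRingType) (J : R -> Prop).

Lemma ideal_pow0 k : ideal_pow J k 0.
Proof. by case: k => [|k] //=; exists [::]; rewrite big_nil. Qed.

Lemma ideal_powD k x y :
  ideal_pow J k x -> ideal_pow J k y -> ideal_pow J k (x + y).
Proof.
case: k => [|k] //= [s [Js ->]] [t [Jt ->]].
exists (s ++ t); split; last by rewrite big_cat.
by move=> p; rewrite mem_cat => /orP[/Js|/Jt].
Qed.

Lemma ideal_powMl k a x : ideal_pow J k x -> ideal_pow J k (a * x).
Proof.
elim: k a x => [|k IHk] a x //= [s [Js ->]].
exists [seq (p.1, a * p.2) | p <- s]; split.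
  by move=> _ /mapP[p /Js[Jp1 Jp2] ->]; split; last exact: IHk.
by rewrite big_map mulr_sumr; apply: eq_bigr => p _ /=; rewrite mulrCA.
Qed.

Lemma ideal_pow_mulS k x y : J x -> ideal_pow J k y -> ideal_pow J k.+1 (x * y).
Proof.
by move=> Jx Jy; exists [:: (x, y)]; rewrite big_seq1; split=> // p /[!inE] /eqP->.
Qed.

Lemma ideal_pow_ind (Q : nat -> R -> Prop) :
    (forall x, Q 0%N x) -> (forall k, Q k.+1 0) ->
    (forall k x y, Q k.+1 x -> Q k.+1 y -> Q k.+1 (x + y)) ->
    (forall k x y, J x -> Q k y -> Q k.+1 (x * y)) ->
  forall k x, ideal_pow J k x -> Q k x.
Proof.
move=> Q0 Qk0 QD QM; elim=> [|k IHk] x; first by move=> _; apply: Q0.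
case=> s [Js ->]; elim: s Js => [|p s IHs] Js; first by rewrite big_nil.
have [Jp1 Jp2] := Js p (mem_head _ _).
rewrite big_cons; apply: QD; first by apply: QM (IHk _ Jp2).
by apply: IHs => q sq; apply: Js; rewrite inE sq orbT.
Qed.

End IdealPow.

Section Nilrad.
Variable R : comPzRingType.

Lemma nilrad_mull (x y : R) : nilrad x -> nilrad (y * x).
Proof. by case=> l xl0; exists l; rewrite exprMn xl0 mulr0. Qed.

Lemma nilrad_unit_cancel (x u v : R) : u * v = 1 -> nilrad (x * u) -> nilrad x.
Proof. by move=> uv /(nilrad_mull v); rewrite mulrCA (mulrC v) uv mulr1. Qed.

End Nilrad.

Lemma nilrad_rmorph (R S : comPzRingType) (f : {rmorphism R -> S}) a :
  nilrad a -> nilrad (f a).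
Proof. by case=> l al0; exists l; rewrite -rmorphXn al0 rmorph0. Qed.

Section LocPowers.
Variables (R T : comPzRingType) (phi : {rmorphism R -> T}) (b : R) (bi : T).
Hypothesis HT : is_loc_powers phi b bi.

Definition frac_powb (Q : R -> Prop) (t : T) :=
  exists k a, Q a /\ t * phi b ^+ k = phi a.

Lemma frac_powbT t : frac_powb (fun=> True) t.
Proof. by case: HT => _ [/(_ t)[a [k Ea]] _]; exists k, a. Qed.

Lemma loc_powers_eq a a' : phi a = phi a' -> exists k, b ^+ k * a = b ^+ k * a'.
Proof. by case: HT => _ [_ /(_ a a')[]]. Qed.

Lemma nilrad_mul_powb t k : nilrad (t * phi b ^+ k) -> nilrad t.
Proof.
by case: HT => bbi _; apply: nilrad_unit_cancel (bi ^+ k) _; rewrite -exprMn bbi expr1n.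
Qed.

Lemma nilrad_frac_powb t : nilrad t -> frac_powb (@nilrad R) t.
Proof.
move=> [l tl0]; have [k [a [_ Ea]]] := frac_powbT t.
have [j Ej] : exists j, b ^+ j * a ^+ l = b ^+ j * 0.
  by apply: loc_powers_eq; rewrite rmorphXn -Ea exprMn tl0 mul0r rmorph0.
exists (k + j)%N, (b ^+ j * a); split.
  exists l.+1; have -> : (b ^+ j * a) ^+ l.+1 = b ^+ j ^+ l * a * (b ^+ j * a ^+ l).
    by rewrite exprS !exprMn; ring.
  by rewrite Ej !mulr0.
by rewrite rmorphM rmorphXn -Ea exprD; ring.
Qed.

Lemma ideal_pow_frac_powb k t :
  ideal_pow (@nilrad T) k t -> frac_powb (ideal_pow (@nilrad R) k) t.
Proof.
move: k t; apply: (ideal_pow_ind (Q := fun k => frac_powb (ideal_pow (@nilrad R) k))).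
- by move=> t; have [k [a [_ Ea]]] := frac_powbT t; exists k, a.
- by move=> k; exists 0%N, 0; rewrite mul0r rmorph0; split; first exact: ideal_pow0.
- move=> k t t' [M [a [Ha Ea]]] [M' [a' [Ha' Ea']]].
  exists (M + M')%N, (b ^+ M' * a + b ^+ M * a'); split.
    by apply: ideal_powD; apply: ideal_powMl.
  by rewrite rmorphD !rmorphM !rmorphXn -Ea -Ea' exprD; ring.
- move=> k u t /nilrad_frac_powb [M [a [Ha Ea]]] [M' [a' [Ha' Ea']]].
  exists (M + M')%N, (a * a'); split; first exact: ideal_pow_mulS.
  by rewrite rmorphM -Ea -Ea' exprD; ring.
Qed.

Lemma frac_powb_common_denom (I : finType) (t : I -> T) :
  exists N (a : I -> R), forall i, t i * phi b ^+ N = phi (a i).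
Proof.
have /fin_all_exists[ak Hak] i : exists ak : R * nat, t i * phi b ^+ ak.2 = phi ak.1.
  by have [k [a [_ Ea]]] := frac_powbT (t i); exists (a, k).
exists (\max_i (ak i).2)%N, (fun i => (ak i).1 * b ^+ (\max_i (ak i).2 - (ak i).2)) => i.
by rewrite rmorphM rmorphXn -Hak -mulrA -exprD subnKC //; apply: leq_bigmax.
Qed.

Lemma nilrad_independent_loc_powers (I : finType) k (y : I -> R) :
    (forall c : I -> R, ideal_pow (@nilrad R) k (\sum_i c i * y i) ->
       forall i, nilrad (c i)) ->
  forall t : I -> T, ideal_pow (@nilrad T) k (\sum_i t i * (phi (y i) * bi)) ->
  forall i, nilrad (t i).
Proof.
move=> indep t /ideal_pow_frac_powb[M [a [Ha Ea]]] i.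
have [N [c Ec]] := frac_powb_common_denom t.
have [l El] : exists l, b ^+ l * (b ^+ M * \sum_j c j * y j) =
                        b ^+ l * (b ^+ N.+1 * a).
  apply: loc_powers_eq; rewrite !rmorphM !rmorphXn -Ea rmorph_sum !mulr_sumr.
  rewrite mulr_suml mulr_sumr; apply: eq_bigr => j _.
  case: HT => bbi _; rewrite rmorphM -Ec exprS.
  by rewrite -[LHS]mulr1 -bbi; ring.
have Hc : ideal_pow (@nilrad R) k (\sum_j (b ^+ l * b ^+ M * c j) * y j).
  have -> : \sum_j b ^+ l * b ^+ M * c j * y j = b ^+ l * (b ^+ M * \sum_j c j * y j).
    by rewrite !mulr_sumr; apply: eq_bigr => j _; rewrite !mulrA.
  by rewrite El mulrA; apply: ideal_powMl.
have := nilrad_rmorph phi (indep _ Hc i).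
rewrite !rmorphM !rmorphXn -Ec mulrC -mulrA -!exprD.
exact: nilrad_mul_powb.
Qed.

End LocPowers.

Section LocAtPrime.
Variables (T S : comPzRingType) (Rp C : T -> Prop) (psi : T -> S).
Hypothesis HS : is_loc_at_prime Rp C psi.
Hypotheses (Rp0 : Rp 0) (Rp1 : Rp 1)
  (RpD : forall u v, Rp u -> Rp v -> Rp (u + v))
  (RpM : forall u v, Rp u -> Rp v -> Rp (u * v)).

Lemma psi1 : psi 1 = 1.
Proof. by case: HS. Qed.

Lemma psiD u v : Rp u -> Rp v -> psi (u + v) = psi u + psi v.
Proof. by case: HS => _ [D _]; apply: D. Qed.

Lemma psiM u v : Rp u -> Rp v -> psi (u * v) = psi u * psi v.
Proof. by case: HS => _ [_ [M _]]; apply: M. Qed.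

Lemma psi0 : psi 0 = 0.
Proof.
by have := psiD Rp0 Rp0; rewrite addr0 => /(congr1 (fun z => z - psi 0)); rewrite subrr addrK.
Qed.

Lemma psi_eq a a' : Rp a -> Rp a' -> psi a = psi a' ->
  exists c, Rp c /\ ~ C c /\ c * a = c * a'.
Proof. by case: HS => _ [_ [_ [_ [_ /(_ a a')]]]] H Ra Ra' /(H Ra Ra'). Qed.

Lemma RpX u k : Rp u -> Rp (u ^+ k).
Proof. by move=> Ru; elim: k => [|k IHk]; rewrite ?expr0 // exprS; apply: RpM. Qed.

Lemma psiX u k : Rp u -> psi (u ^+ k) = psi u ^+ k.
Proof.
move=> Ru; elim: k => [|k IHk]; first by rewrite !expr0 psi1.
by rewrite !exprS psiM ?IHk //; apply: RpX.
Qed.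

Lemma Rp_psi_sum (I : finType) (F : I -> T) : (forall i, Rp (F i)) ->
  Rp (\sum_i F i) /\ psi (\sum_i F i) = \sum_i psi (F i).
Proof.
move=> RF; apply: (big_rec2 (fun u z => Rp u /\ psi u = z)); first by split; last exact: psi0.
by move=> i u z _ [Ru <-]; split; [apply: RpD | rewrite psiD].
Qed.

Lemma nilrad_psi u : Rp u -> nilrad u -> nilrad (psi u).
Proof. by move=> Ru [l ul0]; exists l; rewrite -psiX // ul0 psi0. Qed.

Definition denom (e : T) := Rp e /\ exists v, psi e * v = 1.

Lemma denom1 : denom 1.
Proof. by split=> //; exists 1; rewrite psi1 mulr1. Qed.

Lemma denomM e e' : denom e -> denom e' -> denom (e * e').
Proof.
move=> [Re [v ev]] [Re' [v' ev']]; split; first exact: RpM.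
by exists (v * v'); rewrite psiM // mulrACA ev ev' mulr1.
Qed.

Lemma denom_notC e : Rp e -> ~ C e -> denom e.
Proof. by case: HS => _ [_ [_ [H _]]] Re /(H _ Re). Qed.

Definition frac_loc (Q : T -> Prop) (x : S) :=
  exists a e, Rp a /\ denom e /\ x * psi e = psi a /\ Q a.

Lemma frac_locT x : frac_loc (fun=> True) x.
Proof.
have [_ [_ [_ [_ [/(_ x)[a [e [Ra [Re [Ce Ea]]]]] _]]]]] := HS.
by exists a, e; split=> //; split; first exact: denom_notC.
Qed.

Lemma nilrad_frac_loc x : nilrad x -> frac_loc (@nilrad T) x.
Proof.
move=> [l xl0]; have [a [e [Ra [[Re Ue] [Ea _]]]]] := frac_locT x.
have al0 : psi (a ^+ l) = psi 0 by rewrite psiX // -Ea exprMn xl0 mul0r psi0.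
have [d [Rd [Cd Ed]]] := psi_eq (RpX l Ra) Rp0 al0.
exists (d * a), (d * e); split; first exact: RpM.
split; first by apply: denomM; [apply: denom_notC | split].
split; first by rewrite !psiM // -Ea; ring.
exists l.+1; have -> : (d * a) ^+ l.+1 = d ^+ l * a * (d * a ^+ l).
  by rewrite exprS exprMn; ring.
by rewrite Ed !mulr0.
Qed.

Lemma ideal_pow_frac_loc k x :
  ideal_pow (@nilrad S) k x -> frac_loc (ideal_pow (@nilrad T) k) x.
Proof.
move: k x; apply: (ideal_pow_ind (Q := fun k => frac_loc (ideal_pow (@nilrad T) k))).
- by move=> x; have [a [e [Ra [De [Ea _]]]]] := frac_locT x; exists a, e.
- move=> k; exists 0, 1; split=> //; split; first exact: denom1.
  by rewrite mul0r psi0; split=> //; apply: ideal_pow0.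
- move=> k x x' [a [e [Ra [De [Ea Ha]]]]] [a' [e' [Ra' [De' [Ea' Ha']]]]].
  have [[Re _] [Re' _]] := (De, De').
  exists (a * e' + a' * e), (e * e'); split; first by apply: RpD; apply: RpM.
  split; first exact: denomM.
  split; last by apply: ideal_powD; rewrite mulrC; apply: ideal_powMl.
  by rewrite (psiD (RpM Ra Re') (RpM Ra' Re)) !psiM // -Ea -Ea'; ring.
- move=> k u x /nilrad_frac_loc[a [e [Ra [De [Ea Ha]]]]] [a' [e' [Ra' [De' [Ea' Ha']]]]].
  exists (a * a'), (e * e'); split; first exact: RpM.
  split; first exact: denomM.
  split; last exact: ideal_pow_mulS.
  have [[Re _] [Re' _]] := (De, De').
  by rewrite !psiM // -Ea -Ea'; ring.
Qed.

Lemma frac_loc_common_denom (I : finType) (x : I -> S) :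
  exists e (a : I -> T), denom e /\ forall i, Rp (a i) /\ x i * psi e = psi (a i).
Proof.
suff [e [a [De Ha]]] : exists e (a : I -> T),
    denom e /\ forall i, i \in enum I -> Rp (a i) /\ x i * psi e = psi (a i).
  by exists e, a; split=> // i; apply: Ha; rewrite mem_enum.
elim: (enum I) => [|j s [e [a [[Re Ue] Ha]]]].
  by exists 1, (fun=> 0); split=> //; apply: denom1.
have [aj [ej [Raj [[Rej Uej] [Ej _]]]]] := frac_locT (x j).
exists (e * ej), (fun i => if i == j then aj * e else a i * ej).
split; first by apply: denomM.
move=> i; rewrite inE; case: eqP => [-> _ | _ /= /Ha[Rai Ei]].
  by split; [exact: RpM | rewrite !psiM // mulrA (mulrC _ (psi e)) -mulrA Ej mulrC].
by split; [exact: RpM | rewrite !psiM // mulrA Ei].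
Qed.

Lemma nilrad_independent_loc_at_prime (I : finType) k (Y : I -> T) :
    (forall i, Rp (Y i)) ->
    (forall a : I -> T, (forall i, Rp (a i)) ->
       ideal_pow (@nilrad T) k (\sum_i a i * Y i) -> forall i, nilrad (a i)) ->
  forall x : I -> S, ideal_pow (@nilrad S) k (\sum_i x i * psi (Y i)) ->
  forall i, nilrad (x i).
Proof.
move=> RY indep x /ideal_pow_frac_loc[w [e [Rw [De [Ew Hw]]]]] i.
have [d [a [Dd Ha]]] := frac_loc_common_denom x.
have Ra j : Rp (a j) by case: (Ha j).
have [Re _] := De; have [Rd _] := Dd.
have [RS psiS] := Rp_psi_sum (fun j => RpM (Ra j) (RY j)).
have : psi (e * \sum_j a j * Y j) = psi (d * w).
  rewrite !psiM // psiS -Ew mulr_sumr mulr_suml mulr_sumr; apply: eq_bigr => j _.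
  by rewrite psiM // -(proj2 (Ha j)); ring.
case/(psi_eq (RpM Re RS) (RpM Rd Rw)) => c [Rc [Cc Ec]].
have Hce : ideal_pow (@nilrad T) k (\sum_j (c * e * a j) * Y j).
  have -> : \sum_j c * e * a j * Y j = c * (e * \sum_j a j * Y j).
    by rewrite !mulr_sumr; apply: eq_bigr => j _; rewrite !mulrA.
  by rewrite Ec; do 2!apply: ideal_powMl.
have Rce := RpM Rc Re.
have := nilrad_psi (RpM Rce (Ra i)) (indep _ (fun j => RpM Rce (Ra j)) Hce i).
have [_ [v Uv]] := denomM (denomM (denom_notC Rc Cc) De) Dd.
rewrite (psiM Rce (Ra i)) -(proj2 (Ha i)) mulrCA -(psiM Rce Rd).
exact: nilrad_unit_cancel Uv.
Qed.

End LocAtPrime.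

Theorem mainTheorem17
  (R : comNzRingType) (m : R -> Prop)
  (Hnoeth : noetherian R) (Hloc : is_local m)
  (G : zmodType) (le : G -> G -> bool) (Hle : ordered_group le)
  (nu : R -> option G) (Hnu : is_valuation le nu) (Hcent : centered_on le nu m)
  (Hass : forall P : R -> Prop, is_assoc_prime P <-> (forall x, P x <-> nilrad x))
  (n r s : nat) (Hn : (1 <= n)%N)
  (y : 'I_(r + s) -> R)
  (Hy : forall i, ideal_pow (@nilrad R) n (y i))
  (Hgen : forall z, ideal_pow (@nilrad R) n z ->
     exists c : 'I_(r + s) -> R,
       ideal_pow (@nilrad R) n.+1 (z - \sum_(i < r + s) c i * y i))
  (b : R) (Hb : ~ nilrad b)
  (* T = R_b *)
  (T : comNzRingType) (phi : {rmorphism R -> T}) (bi : T)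
  (HT : is_loc_powers phi b bi)
  (* R' = (R/J(b))[y_1/b, ..., y_r/b] inside R_b *)
  (Rp : T -> Prop)
  (HRp : forall t, Rp t <-> gen_subring
           (fun u => (exists a, u = phi a) \/ (exists i : 'I_r, u = phi (y (lshift s i)) * bi)) t)
  (* C = center of nu on R' *)
  (C : T -> Prop)
  (HC : forall t, C t <-> (Rp t /\ exists (a : R) (k : nat),
           t * phi b ^+ k = phi a /\ vlt le (nu (b ^+ k)) (nu a)))
  (* R^(1) = R'_C, with the canonical map psi *)
  (R1 : comNzRingType) (psi : T -> R1) (HS : is_loc_at_prime Rp C psi) :
  (forall c : 'I_r -> R,
     ideal_pow (@nilrad R) n.+1 (\sum_(i < r) c i * y (lshift s i)) ->
     forall i, nilrad (c i)) ->
  forall c : 'I_r -> R1,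
    ideal_pow (@nilrad R1) n.+1 (\sum_(i < r) c i * psi (phi (y (lshift s i)) * bi)) ->
    forall i, nilrad (c i).
Proof.
move=> indep.
have RpD u v : Rp u -> Rp v -> Rp (u + v).
  by move=> /HRp Ru /HRp Rv; apply/HRp; apply: gs_add.
have RpM u v : Rp u -> Rp v -> Rp (u * v).
  by move=> /HRp Ru /HRp Rv; apply/HRp; apply: gs_mul.
have Rp0 : Rp 0 by apply/HRp; apply: gs_base; left; exists 0; rewrite rmorph0.
have Rp1 : Rp 1 by apply/HRp; apply: gs_one.
have RpY i : Rp (phi (y (lshift s i)) * bi).
  by apply/HRp; apply: gs_base; right; exists i.
apply: (nilrad_independent_loc_at_prime HS Rp0 Rp1 RpD RpM RpY) => t _.
exact: (nilrad_independent_loc_powers HT indep).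
Qed.
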